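(* If $x\in\mathrm{Sort}_n(132,321)$, then $x$ avoids the pattern $123$.
   Context: A permutation contains a pattern $p$ if it has a subsequence order-isomorphic to $p$; otherwise it avoids $p$. For a set $T$ of patterns, the map $s_T$ is defined as follows: the entries of the input permutation are read from left to right, with an initially empty stack. At each step, if the input is nonempty and pushing the next input entry onto the stack produces a stack whose contents, read from top to bottom, avoid every pattern in $T$, that entry is pushed; otherwise the top entry of the stack is popped and appended to the output. When the input is exhausted, the remaining stack entries are popped one at a time to the output. Write $s_{\sigma,\tau}=s_{\{\sigma,\tau\}}$ and $s=s_{\{21\}}$ (West's stack-sorting map). $\mathrm{Sort}_n(\sigma,\tau)$ is the set of $x\in S_n$ with $s(s_{\sigma,\tau}(x))=12\cdots n$. *)

(* Permutations of [n] are sequences of nat that are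
   rearrangements of 1..n (iota 1 n). *)
From mathcomp Require Import all_boot.
Set Implicit Arguments. Unset Strict Implicit. Unset Printing Implicit Defensive.

Definition order_iso (s p : seq nat) : bool :=
  (size s == size p) &&
  all (fun i => all (fun j => (nth 0 s i < nth 0 s j) == (nth 0 p i < nth 0 p j))
                    (iota 0 (size p))) (iota 0 (size p)).

Fixpoint all_masks (k : nat) : seq (seq bool) :=
  match k with
  | 0 => [:: [::]]
  | k'.+1 => [seq b :: m | b <- [:: true; false], m <- all_masks k']
  end.

Definition contains (s p : seq nat) : bool :=
  has (fun m => order_iso (mask m s) p) (all_masks (size s)).

Definition avoids (s p : seq nat) : bool := ~~ contains s p.

(* The stack is a list whose head is the top of the stack, so the stack
   contents read from top to bottom is just the list itself.  Each step
   either pushes or pops; fuel 2n+1 is sufficient for an input of size n. *)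
Fixpoint stack_run (T : seq (seq nat)) (fuel : nat) (inp stk out : seq nat)
  : seq nat :=
  match fuel with
  | 0 => out ++ stk
  | fuel'.+1 =>
    match inp with
    | a :: inp' =>
        if all (fun p => avoids (a :: stk) p) T
        then stack_run T fuel' inp' (a :: stk) out
        else match stk with
             | b :: stk' => stack_run T fuel' inp stk' (rcons out b)
             | [::] => out (* unreachable when patterns have length >= 2 *)
             end
    | [::] => out ++ stk
    end
  end.

Definition sT (T : seq (seq nat)) (x : seq nat) : seq nat :=
  stack_run T (2 * size x).+1 x [::] [::].

Definition s2 (sigma tau : seq nat) := sT [:: sigma; tau].

Definition west_s := sT [:: [:: 2; 1]].

Definition Sort_n (n : nat) (sigma tau : seq nat) (x : seq nat) : Prop :=
  perm_eq x (iota 1 n) /\ west_s (s2 sigma tau x) = iota 1 n.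

Example ex1 : west_s [:: 3; 1; 2] = [:: 1; 2; 3]. Proof. vm_compute. reflexivity. Qed.
Example ex2 : west_s [:: 2; 3; 1] = [:: 2; 1; 3]. Proof. vm_compute. reflexivity. Qed.
Example ex3 : contains [:: 2; 4; 1; 3] [:: 1; 2] = true. Proof. vm_compute. reflexivity. Qed.
Example ex4 : avoids [:: 3; 2; 1] [:: 1; 2] = true. Proof. vm_compute. reflexivity. Qed.
Example ex5 : s2 [:: 1;3;2] [:: 3;2;1] [:: 1;2;3] = [:: 2;3;1]. Proof. vm_compute. reflexivity. Qed.

From mathcomp Require Import all_boot zify.
Set Implicit Arguments. Unset Strict Implicit. Unset Printing Implicit Defensive.

(* If x contains 123, it contains an occurrence a ... b ... c (a < b < c) in
   which a is a left-to-right minimum of x.  In s_{132,321}, every entry below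
   a on the stack is then larger than a; together with 132-avoidance this makes
   the stack from a downwards increasing, so nothing pushed onto a can create a
   132 or a 321, and a is never popped before the input is exhausted.  When c
   arrives, b cannot still be on the stack above a (c b a would be a 321), so b
   has been output; hence b, c, a appear in this order in s_{132,321}(x).  West's
   map never sorts a permutation with b ... c ... a and b < c: b leaves the stack
   before c enters, hence before a does, so b precedes a in the output. *)

Lemma mem_all_masks k m : (m \in all_masks k) = (size m == k).
Proof.
have cons_inj (b : bool) : injective (cons b) by move=> ? ? [].
have notin_cons (b b' : bool) m' A : b != b' -> b :: m' \notin [seq b' :: i | i <- A].
  by move=> neq; apply/mapP => -[? _ [eq_b _]]; rewrite eq_b eqxx in neq.
elim: k m => [|k IH] [|b m] //=; rewrite cats0 mem_cat.
  by apply/negbTE/norP; split; apply/mapP => -[].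
rewrite eqSS -IH.
by case: b; rewrite mem_map // (negbTE (notin_cons _ _ _ _ _)) ?orbF.
Qed.

Lemma containsP s p :
  reflect (exists2 q, subseq q s & order_iso q p) (contains s p).
Proof.
apply: (iffP hasP) => [[m _ iso] | [q /subseqP[m m_size ->] iso]].
  by exists (mask m s) => //; apply: mask_subseq.
by exists m; rewrite ?mem_all_masks ?m_size.
Qed.

Lemma contains_subseq s t p : subseq s t -> contains s p -> contains t p.
Proof.
by move=> st /containsP[q qs iso]; apply/containsP; exists q => //; apply: subseq_trans st.
Qed.

Lemma avoids_cons a s p : avoids (a :: s) p -> avoids s p.
Proof. by apply: contra; apply/contains_subseq/subseq_cons. Qed.

Lemma avoids_singleton a p : 1 < size p -> avoids [:: a] p.
Proof. by case: p => [|? [|? ?]]. Qed.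

Lemma order_iso_lt q p i j : order_iso q p -> i < size p -> j < size p ->
  (nth 0 q i < nth 0 q j) = (nth 0 p i < nth 0 p j).
Proof.
case/andP=> _ /allP iso ip jp.
move: (iso i); rewrite mem_iota add0n ip => /(_ isT)/allP/(_ j).
by rewrite mem_iota add0n jp => /(_ isT)/eqP.
Qed.

Lemma contains_size3 s p : size p = 3 -> contains s p ->
  exists u1 u2 u3, subseq [:: u1; u2; u3] s /\ order_iso [:: u1; u2; u3] p.
Proof.
move=> p3 /containsP[q qs iso]; have /andP[/eqP] := iso; rewrite p3.
by case: q qs iso => [|u1 [|u2 [|u3 [|? ?]]]] // qs iso _; exists u1, u2, u3.
Qed.

Lemma order_iso21 u1 u2 : order_iso [:: u1; u2] [:: 2; 1] = (u2 < u1).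
Proof. by rewrite /order_iso /= !ltnn /=; case: (ltngtP u1 u2) => //= *; lia. Qed.

Lemma order_iso132 u1 u2 u3 :
  order_iso [:: u1; u2; u3] [:: 1; 3; 2] = (u1 < u3 < u2).
Proof.
rewrite /order_iso /= !ltnn /=.
by case: (ltngtP u1 u2); case: (ltngtP u1 u3); case: (ltngtP u2 u3) => //= *; lia.
Qed.

Lemma order_iso321 u1 u2 u3 :
  order_iso [:: u1; u2; u3] [:: 3; 2; 1] = (u3 < u2 < u1).
Proof.
rewrite /order_iso /= !ltnn /=.
by case: (ltngtP u1 u2); case: (ltngtP u1 u3); case: (ltngtP u2 u3) => //= *; lia.
Qed.

Lemma mem_cat_cons (T : eqType) (z v : T) s t :
  (z \in s ++ v :: t) = (z == v) || (z \in s ++ t).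
Proof. by rewrite !mem_cat inE orbCA. Qed.

Section Pivot.

Variable T : eqType.
Implicit Types (u v : T) (x p s : seq T).

Lemma notin_uniq_pivot v p s : uniq (p ++ v :: s) -> v \notin p.
Proof. by rewrite cat_uniq /= => /and3P[_ /norP[]]. Qed.

Lemma subseq2_pivot x u v p s :
  uniq x -> x = p ++ v :: s -> subseq [:: u; v] x -> u \in p.
Proof.
move=> x_uniq x_eq; rewrite x_eq -[[:: u; v]]/([:: u] ++ v :: [::]) in x_uniq *.
by rewrite (uniq_subseq_pivot _ _ x_uniq) sub1seq => /andP[].
Qed.

End Pivot.

Section StackRunInvariant.

Variables (T : seq (seq nat)) (x : seq nat) (Inv : seq nat -> seq nat -> Prop).

Hypothesis T_long : all (fun p => 1 < size p) T.
Hypothesis Inv_init : Inv [::] [::].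
Hypothesis Inv_push : forall pfx a inp stk out,
  x = pfx ++ a :: inp -> perm_eq pfx (out ++ stk) ->
  all (fun p => avoids (a :: stk) p) T -> Inv stk out -> Inv (a :: stk) out.
Hypothesis Inv_pop : forall pfx a inp b stk out,
  x = pfx ++ a :: inp -> perm_eq pfx (out ++ b :: stk) ->
  all (fun p => avoids (b :: stk) p) T ->
  ~~ all (fun p => avoids (a :: b :: stk) p) T ->
  Inv (b :: stk) out -> Inv stk (rcons out b).

(* Every step lowers 2 * size inp + size stk, so the fuel never runs out. *)
Lemma stack_run_inv fuel pfx inp stk out :
  x = pfx ++ inp -> perm_eq pfx (out ++ stk) ->
  all (fun p => avoids stk p) T -> Inv stk out ->
  2 * size inp + size stk < fuel ->
  exists stk' out', [/\ Inv stk' out', perm_eq x (out' ++ stk')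
                      & stack_run T fuel inp stk out = out' ++ stk'].
Proof.
elim: fuel pfx inp stk out => [|fuel IH] // pfx [|a inp] stk out
  x_eq read stk_avoids inv fuel_big /=.
  by exists stk, out; rewrite x_eq cats0.
case: ifP => [push_ok | /negbT push_bad].
  apply: (IH (rcons pfx a)) => //=; first by rewrite cat_rcons.
  - by rewrite perm_rcons perm_sym -cat1s perm_catCA perm_cons perm_sym.
  - exact: Inv_push x_eq read push_ok inv.
  - by move: fuel_big => /=; lia.
case: stk read stk_avoids inv fuel_big push_bad => [|b stk] read stk_avoids inv fuel_big.
  by case/negP; apply/allP => p /(allP T_long)/avoids_singleton.
move=> push_bad; apply: (IH pfx) => //.
- by rewrite cat_rcons.
- by apply/allP => p /(allP stk_avoids)/avoids_cons.
- exact: Inv_pop x_eq read stk_avoids push_bad inv.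
- by move: fuel_big => /=; lia.
Qed.

Lemma sT_inv : exists stk out,
  [/\ Inv stk out, perm_eq x (out ++ stk) & sT T x = out ++ stk].
Proof.
apply: (stack_run_inv (pfx := [::])) => //; last by rewrite addn0.
by apply/allP => p /(allP T_long); case: p => [|? ?].
Qed.

End StackRunInvariant.

Lemma perm_sT T x : all (fun p => 1 < size p) T -> perm_eq x (sT T x).
Proof.
move=> T_long.
by have [//|//|//|stk [out [_ x_perm ->]]] := @sT_inv T x (fun _ _ => True) T_long.
Qed.

Lemma cons_avoids_of_avoids21 v w p : size p = 3 -> nth 0 p 2 < nth 0 p 1 ->
  avoids w [:: 2; 1] -> avoids (v :: w) p.
Proof.
move=> p3 p_desc w_avoids; apply/negP => /contains_size3[// | u1 [u2 [u3 [occ iso]]]].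
have desc : u3 < u2 by rewrite (order_iso_lt (i := 2) (j := 1) iso) ?p3.
have occ23 : subseq [:: u2; u3] w.
  by move: occ => /=; case: eqP => _ occ; [exact: occ | exact: cons_subseq occ].
by case/negP: w_avoids; apply/containsP; exists [:: u2; u3]; rewrite ?order_iso21.
Qed.

Lemma avoids21_of_min_head a s : all (fun z => a < z) s ->
  avoids (a :: s) [:: 1; 3; 2] -> avoids (a :: s) [:: 2; 1].
Proof.
move=> /allP s_gt a_avoids; apply/negP => /containsP[[|u2 [|u3 [|? ?]]] // occ].
rewrite order_iso21 => desc; move: occ => /=; case: eqP => [u2_a | _] occ.
  by move: desc (s_gt u3); rewrite u2_a -sub1seq occ => desc /(_ isT); lia.
have a_lt : a < u3 by apply: s_gt; apply: (mem_subseq occ); rewrite !inE eqxx orbT.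
case/negP: a_avoids; apply/containsP; exists [:: a; u2; u3].
  by rewrite /= eqxx.
by rewrite order_iso132 a_lt desc.
Qed.

Definition ltr_min (x : seq nat) (a : nat) : bool :=
  all (fun z => a < z) (take (index a x) x).

Lemma ltr_min_subseq x u r : uniq x -> subseq (u :: r) x ->
  exists a, [/\ ltr_min x a, a <= u & subseq (a :: r) x].
Proof.
move=> x_uniq occ; have u_x := mem_subseq occ (mem_head u r).
move: x_uniq occ; case/splitPr: u_x => p s x_uniq.
rewrite -[u :: r]/([::] ++ u :: r) (uniq_subseq_pivot _ _ x_uniq) sub0seq => occ_r.
rewrite -cat_rcons in x_uniq *.
have u_in : u \in rcons p u by rewrite mem_rcons mem_head.
have [a a_in a_min] := ex_minnP (ex_intro (fun n => n \in rcons p u) u u_in).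
exists a; split; last 2 first.
- exact: a_min.
- by rewrite -cat1s; apply: cat_subseq; rewrite ?sub1seq.
move: a_min x_uniq; case/splitPr: a_in => q1 q2 a_min.
rewrite -catA cat_cons => x_uniq.
have a_q1 := notin_uniq_pivot x_uniq.
rewrite /ltr_min take_pivot //; apply/allP => z z_q1.
by rewrite ltn_neqAle a_min ?mem_cat ?z_q1 // andbT; apply: contraNneq a_q1 => ->.
Qed.

Section Sort132_321.

Variables (x : seq nat) (a b c : nat).
Hypotheses (x_uniq : uniq x) (a_ltr : ltr_min x a) (abc : a < b < c)
  (occ : subseq [:: a; b; c] x).

Let T := [:: [:: 1; 3; 2]; [:: 3; 2; 1]].

Let occ_ab : subseq [:: a; b] x.
Proof. by apply: subseq_trans occ; rewrite /= !eqxx. Qed.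

Let occ_ac : subseq [:: a; c] x.
Proof.
by apply: subseq_trans occ; apply: (@cat_subseq _ [:: a] _ [:: a]); rewrite ?subseq_cons.
Qed.

Let occ_bc : subseq [:: b; c] x.
Proof. by apply: subseq_trans occ; apply: subseq_cons. Qed.

Definition s132_321_inv (stk out : seq nat) : Prop :=
  [/\ a \in out ++ stk ->
        exists above below, stk = above ++ a :: below /\ all (fun z => a < z) below,
      b \in stk -> subseq [:: b; a] stk
    & c \in out ++ stk -> subseq [:: b; c; a] (out ++ stk)].

Lemma s132_321_inv_push pfx v inp stk out :
  x = pfx ++ v :: inp -> perm_eq pfx (out ++ stk) ->
  all (fun p => avoids (v :: stk) p) T ->
  s132_321_inv stk out -> s132_321_inv (v :: stk) out.
Proof.
move=> x_eq read /and3P[_ avoid321 _] [a_split b_above c_out].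
have read_before u : subseq [:: u; v] x -> u \in out ++ stk.
  by move=> uv; rewrite -(perm_mem read) (subseq2_pivot x_uniq x_eq uv).
have a_stk : a \in out ++ stk -> a \in stk.
  by case/a_split=> [above [below [-> _]]]; rewrite mem_cat mem_head orbT.
split.
- rewrite mem_cat_cons; case: eqP => [v_a _ | _ /a_split[above [below [-> below_gt]]]].
    subst v; exists [::], stk; split=> //; apply/allP => z z_stk.
    have a_pfx : a \notin pfx by apply: (@notin_uniq_pivot _ a pfx inp); rewrite -x_eq.
    move/allP: a_ltr; rewrite x_eq take_pivot //; apply.
    by rewrite (perm_mem read) mem_cat z_stk orbT.
  by exists (v :: above), below.
- rewrite inE; case: eqP => [b_v _ | _ b_stk].
    by subst v; rewrite /= eqxx sub1seq; apply/a_stk/read_before/occ_ab.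
  exact: subseq_trans (b_above b_stk) (subseq_cons stk v).
- rewrite mem_cat_cons; case: eqP => [c_v _ | _ c_read].
  subst v; have b_out : b \in out.
    have := read_before b occ_bc; rewrite mem_cat => /orP[// | b_stk].
    case/negP: avoid321; apply/containsP; exists [:: c; b; a]; last by rewrite order_iso321.
    by rewrite /= eqxx; apply: b_above.
  rewrite -cat1s; apply: cat_subseq; first by rewrite sub1seq.
  by rewrite /= eqxx sub1seq; apply/a_stk/read_before/occ_ac.
exact: subseq_trans (c_out c_read) (cat_subseq (subseq_refl out) (subseq_cons stk v)).
Qed.

Lemma s132_321_inv_pop pfx v inp t stk out :
  x = pfx ++ v :: inp -> perm_eq pfx (out ++ t :: stk) ->
  all (fun p => avoids (t :: stk) p) T ->
  ~~ all (fun p => avoids (v :: t :: stk) p) T ->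
  s132_321_inv (t :: stk) out -> s132_321_inv stk (rcons out t).
Proof.
move=> x_eq read /and3P[avoid132 _ _] pop_bad [a_split b_above c_out].
rewrite /s132_321_inv cat_rcons; split=> //.
- case/a_split=> [[|t' above] [below [[t_eq stk_eq] below_gt]]]; last by exists above, below.
  subst t stk; case/negP: pop_bad; apply/allP => p; rewrite !inE => /orP[] /eqP ->;
    by apply: cons_avoids_of_avoids21; rewrite ?avoids21_of_min_head.
- move=> b_stk; have: subseq [:: b; a] (t :: stk) by rewrite b_above // inE b_stk orbT.
  have read_uniq : uniq (out ++ t :: stk).
    by rewrite -(perm_uniq read); move: x_uniq; rewrite x_eq cat_uniq => /andP[].
  have t_stk : t \notin stk by move: read_uniq; rewrite cat_uniq => /and3P[_ _ /andP[]].
  by rewrite /=; case: eqP => // b_t; rewrite -b_t b_stk in t_stk.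
Qed.

Lemma subseq_s2_132_321 : subseq [:: b; c; a] (s2 [:: 1; 3; 2] [:: 3; 2; 1] x).
Proof.
rewrite /s2 -/T.
have [|stk [out [[_ _ c_out] x_perm ->]]] :=
  sT_inv (T := T) (x := x) isT _ s132_321_inv_push s132_321_inv_pop; first by split.
apply: c_out; rewrite -(perm_mem x_perm); apply: (mem_subseq occ_bc).
by rewrite !inE eqxx orbT.
Qed.

End Sort132_321.

Section WestSort.

Variables (y : seq nat) (a b c : nat).
Hypotheses (y_uniq : uniq y) (bc : b < c) (occ : subseq [:: b; c; a] y).

Let occ_bc : subseq [:: b; c] y.
Proof. by apply: subseq_trans occ; apply: (@cat_subseq _ [:: b; c] _ [:: b; c]). Qed.

Let occ_ca : subseq [:: c; a] y.
Proof. by apply: subseq_trans occ; apply: subseq_cons. Qed.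

Definition west_inv (stk out : seq nat) : Prop :=
  (c \in out ++ stk -> b \in out) /\ (a \in out ++ stk -> subseq [:: b; a] (out ++ stk)).

Lemma west_inv_push pfx v inp stk out :
  y = pfx ++ v :: inp -> perm_eq pfx (out ++ stk) ->
  all (fun p => avoids (v :: stk) p) [:: [:: 2; 1]] ->
  west_inv stk out -> west_inv (v :: stk) out.
Proof.
move=> y_eq read /andP[avoid21 _] [b_out ba].
have read_before u : subseq [:: u; v] y -> u \in out ++ stk.
  by move=> uv; rewrite -(perm_mem read) (subseq2_pivot y_uniq y_eq uv).
split.
- rewrite mem_cat_cons; case: eqP => [c_v _ | _ /b_out //].
  subst v; have := read_before b occ_bc; rewrite mem_cat => /orP[// | b_stk].
  case/negP: avoid21; apply/containsP; exists [:: c; b]; last by rewrite order_iso21.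
  by rewrite /= eqxx sub1seq.
- rewrite mem_cat_cons; case: eqP => [a_v _ | _ a_read].
    subst v; rewrite -cat1s; apply: cat_subseq; last by rewrite sub1seq mem_head.
    by rewrite sub1seq; apply/b_out/read_before/occ_ca.
  exact: subseq_trans (ba a_read) (cat_subseq (subseq_refl out) (subseq_cons stk v)).
Qed.

Lemma west_inv_pop pfx v inp t stk out :
  y = pfx ++ v :: inp -> perm_eq pfx (out ++ t :: stk) ->
  all (fun p => avoids (t :: stk) p) [:: [:: 2; 1]] ->
  ~~ all (fun p => avoids (v :: t :: stk) p) [:: [:: 2; 1]] ->
  west_inv (t :: stk) out -> west_inv stk (rcons out t).
Proof.
move=> _ _ _ _ [b_out ba]; rewrite /west_inv cat_rcons; split=> // /b_out.
by rewrite mem_rcons inE => ->; rewrite orbT.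
Qed.

Lemma subseq_west_s : subseq [:: b; a] (west_s y).
Proof.
rewrite /west_s.
have [|stk [out [[_ ba] y_perm ->]]] :=
  sT_inv (T := [:: [:: 2; 1]]) (x := y) isT _ west_inv_push west_inv_pop; first by split.
by apply: ba; rewrite -(perm_mem y_perm) (mem_subseq occ_ca) // !inE eqxx orbT.
Qed.

End WestSort.

Theorem proposition3p2 (n : nat) (x : seq nat) :
  Sort_n n [:: 1; 3; 2] [:: 3; 2; 1] x -> avoids x [:: 1; 2; 3].
Proof.
move=> [x_perm sorted_out]; apply/negP => /contains_size3[// | u1 [u2 [u3 [occ iso]]]].
have lt12 : u1 < u2 by rewrite (order_iso_lt (i := 0) (j := 1) iso).
have lt23 : u2 < u3 by rewrite (order_iso_lt (i := 1) (j := 2) iso).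
have x_uniq : uniq x by rewrite (perm_uniq x_perm) iota_uniq.
have [a [a_ltr le_a occ_a]] := ltr_min_subseq x_uniq occ.
set y := s2 [:: 1; 3; 2] [:: 3; 2; 1] x.
have y_uniq : uniq y.
  by rewrite -(perm_uniq (perm_sT (T := [:: [:: 1; 3; 2]; [:: 3; 2; 1]]) x isT)).
have abc : a < u2 < u3 by rewrite lt23 (leq_ltn_trans le_a lt12).
have := subseq_west_s y_uniq lt23 (subseq_s2_132_321 x_uniq a_ltr abc occ_a).
rewrite sorted_out => /(subseq_sorted ltn_trans)/(_ (iota_ltn_sorted 1 n)) /=.
by move: abc; lia.
Qed.
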